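(* Let $K$ be a field and $X$ a finite connected poset. For every Lie automorphism $\varphi$ of $I(X,K)$, the map $\widetilde\varphi$ is also a Lie automorphism of $I(X,K)$.
   Context: $I(X,K)$ is the incidence algebra: functions $f:X\times X\to K$ with $f(x,y)=0$ unless $x\le y$, product $(fg)(x,y)=\sum_{x\le t\le y}f(x,t)g(t,y)$; $e_{xy}$ ($x\le y$) is the basis element equal to $1$ at $(x,y)$ and $0$ elsewhere. A Lie automorphism is a bijective linear map preserving $[f,g]=fg-gf$. Let $l(\lfloor x,y\rfloor)$ be the maximum length of a chain in $\{z:x\le z\le y\}$, $L_i=\mathrm{span}_K\{e_{xy}: l(\lfloor x,y\rfloor)=i\}$ ($i\ge0$), so $I(X,K)=\bigoplus_i L_i$. $\widetilde\varphi$ is the linear map sending $e_{xy}\in L_i$ to the $L_i$-component of $\varphi(e_{xy})$ (one has $\varphi(e_{xy})-\widetilde\varphi(e_{xy})\in\bigoplus_{k>i}L_k$). Connected means any two elements are joined by a sequence in which consecutive elements are in a covering relation. *)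

From HB Require Import structures.
From mathcomp Require Import all_boot all_order all_algebra.
Set Implicit Arguments. Unset Strict Implicit. Unset Printing Implicit Defensive.
Import Order.TTheory GRing.Theory.
Local Open Scope ring_scope.

(* Incidence algebra I(X,K) of a finite poset X over a field K, represented
   inside the K-vector space {ffun X * X -> K} of all functions X x X -> K,
   as the subspace of those f with f(x,y) = 0 unless x <= y. *)
Section Incidence.
Variables (K : fieldType) (d : Order.disp_t) (X : finPOrderType d).

Local Notation fnT := {ffun X * X -> K}.

Definition sc (a : K) (f : fnT) : fnT := [ffun q : X * X => a * f q].

Definition incid (f : fnT) : bool :=
  [forall x : X, forall y : X, ~~ (x <= y)%O ==> (f (x, y) == 0)].

Definition imul (f g : fnT) : fnT :=
  [ffun p : X * X => \sum_(t : X | (p.1 <= t)%O && (t <= p.2)%O) f (p.1, t) * g (t, p.2)].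

Definition ilie (f g : fnT) : fnT := imul f g - imul g f.

Definition ebas (x y : X) : fnT := [ffun p : X * X => (p == (x, y))%:R].

(* chain with n+1 elements (i.e. of length n) inside {z : x <= z <= y} *)
Definition chain_in (x y : X) (n : nat) : bool :=
  [exists s : n.+1.-tuple X,
     sorted (fun a b : X => (a < b)%O) s && all (fun z => (x <= z)%O && (z <= y)%O) s].

(* l(floor x,y ceil): maximum length of a chain in [x,y]; a chain has at most
   #|X| elements, so its length is < #|X|. *)
Definition ilen (x y : X) : nat := \max_(n < #|X| | chain_in x y n) n.

Definition Lcomp (i : nat) (f : fnT) : fnT :=
  [ffun p : X * X => if ilen p.1 p.2 == i then f p else 0].

Definition tilde (phi : fnT -> fnT) (f : fnT) : fnT :=
  \sum_(p : X * X | (p.1 <= p.2)%O) sc (f p) (Lcomp (ilen p.1 p.2) (phi (ebas p.1 p.2))).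

Definition lie_automorphism (phi : fnT -> fnT) : Prop :=
  [/\ (forall f, incid f -> incid (phi f)),
      (forall (a : K) f g, incid f -> incid g -> phi (sc a f + g) = sc a (phi f) + phi g),
      (forall f g, incid f -> incid g -> phi f = phi g -> f = g),
      (forall g, incid g -> exists2 f, incid f & phi f = g)
    & (forall f g, incid f -> incid g -> phi (ilie f g) = ilie (phi f) (phi g))].

Definition covers (x y : X) : bool :=
  (x < y)%O && [forall z : X, ~~ ((x < z)%O && (z < y)%O)].

Definition poset_connected : Prop :=
  forall x y : X, exists s : seq X,
    path (fun a b => covers a b || covers b a) x s /\ last x s = y.

End Incidence.

(* Write F_k for the span of the e_xy with l(x,y) >= k.  These subspaces form a
   filtration with [F_a, F_b] in F_(a+b), and since e_xw = [e_xy, e_yw] whenever y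
   precedes w on a maximal chain from x to w, every Lie automorphism maps each F_k
   onto itself.  Conjugating phi by the unipotent 1 + s, s in F_m, changes it only
   by terms of higher degree; the weights f |-> f(a,a) - f(b,b) of the images of
   the idempotents e_zz satisfy a cocycle identity at level m which lets us choose
   s so that these images become diagonal up to level m + 1.  After #|X| steps we
   get a Lie automorphism psi agreeing with phi up to higher degree and mapping
   each e_zz to a diagonal element.  Then psi(e_xy) is a common eigenvector of
   the psi(e_zz), hence a multiple of a single e_q, and comparing the degrees of
   e_q and of its preimage forces l(q) = l(x,y): psi is exactly phi~. *)

From HB Require Import structures.
From mathcomp Require Import all_boot all_order all_algebra ring.
Set Implicit Arguments. Unset Strict Implicit. Unset Printing Implicit Defensive.
Import Order.TTheory GRing.Theory.
Local Open Scope ring_scope.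

Lemma nilpotent_unit (R : pzRingType) (y : R) n : y ^+ n = 0 ->
  (1 - y) * (\sum_(i < n) y ^+ i) = 1 /\ (\sum_(i < n) y ^+ i) * (1 - y) = 1.
Proof.
move=> yn0; have geom := subrX1 y n; rewrite yn0 sub0r in geom.
have comm_sum : GRing.comm (y - 1) (\sum_(i < n) y ^+ i).
  apply: commr_sum => i _; apply/commr_sym/commrB; last exact: commr1.
  exact/commr_sym/commrX/commr_refl.
by rewrite -opprB mulNr mulrN -comm_sum -geom opprK.
Qed.

Lemma conj_subr (R : pzRingType) (u v f : R) : u * v = 1 ->
  u * f * v - f = (u * f - f * u) * v.
Proof. by move=> uv; rewrite mulrBl -{2}[f]mulr1 -uv mulrA. Qed.

(** * Lengths of intervals *)

Section ChainLength.
Variables (d : Order.disp_t) (X : finPOrderType d).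
Implicit Types x y t w : X.

Lemma chain_inP x y n : reflect
  (exists2 s : seq X, size s = n.+1 &
     sorted <%O s && all (fun z => (x <= z)%O && (z <= y)%O) s)
  (chain_in x y n).
Proof.
apply: (iffP existsP) => [[s hs]|[s sz hs]]; first by exists s; rewrite ?size_tuple.
have sz' : size s == n.+1 by rewrite sz.
by exists (Tuple sz').
Qed.

Lemma chain_in_size x y n : chain_in x y n -> (n < #|X|)%N.
Proof.
case/chain_inP=> s sz /andP[/lt_sorted_uniq us _].
by rewrite -ltnS -sz -(card_uniqP us) ltnS max_card.
Qed.

Lemma chain_in0 x y : chain_in x y 0 = (x <= y)%O.
Proof.
apply/chain_inP/idP => [[[|z []] // _ /and3P[_ /andP[xz zy] _]]|xy].
  exact: le_trans xz zy.
by exists [:: x]; rewrite //= lexx xy.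
Qed.

Lemma chain_in_le x y n : chain_in x y n -> (x <= y)%O.
Proof.
case/chain_inP=> -[|z s] // _ /andP[_ /= /andP[/andP[xz zy] _]].
exact: le_trans xz zy.
Qed.

Lemma ilen_ge x y n : chain_in x y n -> (n <= ilen x y)%N.
Proof. by move=> c; apply: (leq_bigmax_cond (Ordinal (chain_in_size c))). Qed.

Lemma ilen_chain x y : (x <= y)%O -> chain_in x y (ilen x y).
Proof.
rewrite -chain_in0 => c0.
by rewrite /ilen (bigop.bigmax_eq_arg (Ordinal (chain_in_size c0))) //; case: arg_maxnP.
Qed.

Lemma ilen_nle x y : ~~ (x <= y)%O -> ilen x y = 0.
Proof.
move=> nxy; apply/eqP; rewrite -leqn0; apply/bigmax_leqP => i /chain_in_le xy.
by rewrite xy in nxy.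
Qed.

Lemma ilen_lt_card x y : (ilen x y < #|X|)%N.
Proof.
have [/ilen_chain/chain_in_size //|/ilen_nle ->] := boolP (x <= y)%O.
by apply/card_gt0P; exists x.
Qed.

Lemma ilen_xx x : ilen x x = 0.
Proof.
case/chain_inP: (ilen_chain (lexx x)) => -[|a [|b s]] //= [] // _.
case/and3P=> /andP[ab _] /andP[xa ax] /andP[/andP[xb bx] _].
have ea : a = x by apply/le_anti; rewrite ax xa.
have eb : b = x by apply/le_anti; rewrite bx xb.
by rewrite ea eb ltxx in ab.
Qed.

Lemma ilen_gt0 x y : (0 < ilen x y)%N = (x < y)%O.
Proof.
apply/idP/idP => [pos|xy].
  have xy : (x <= y)%O by apply: contraLR pos => /ilen_nle ->.
  case/chain_inP: (ilen_chain xy) pos => -[|a [|b s]] //= [<-] //.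
  case/and3P=> /andP[ab _] /andP[xa _] /andP[/andP[_ by'] _] _.
  exact: le_lt_trans xa (lt_le_trans ab by').
apply: (@ilen_ge x y 1); apply/chain_inP; exists [:: x; y] => //.
by rewrite /= xy !lexx (ltW xy).
Qed.

Lemma ilen_eq0 x y : (ilen x y == 0%N) = ~~ (x < y)%O.
Proof. by rewrite -ilen_gt0 lt0n negbK. Qed.

Lemma ilen_add x t w : (x <= t)%O -> (t <= w)%O ->
  (ilen x t + ilen t w <= ilen x w)%N.
Proof.
move=> xt tw; case/chain_inP: (ilen_chain xt) => s1 sz1 /andP[so1 al1].
case/chain_inP: (ilen_chain tw) => s2 sz2 /andP[so2 al2].
apply: ilen_ge; apply/chain_inP; exists (s1 ++ behead s2).
  by rewrite size_cat size_behead sz1 sz2.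
rewrite all_cat; apply/and3P; split.
- case: s1 sz1 so1 al1 => [|a1 s1] // _ so1 al1; rewrite /= cat_path (so1 : path _ a1 s1) /=.
  case: s2 sz2 so2 al2 => [|a2 [|b2 s2]] //= _ /andP[a2b2 ->] /andP[/andP[ta2 _] _].
  rewrite andbT; apply: le_lt_trans a2b2; apply: le_trans ta2.
  by case/andP: (allP al1 _ (mem_last a1 s1)).
- by apply/allP => z /(allP al1) /andP[-> zt]; rewrite (le_trans zt tw).
- apply/allP => z /mem_behead /(allP al2) /andP[tz ->].
  by rewrite (le_trans xt tz).
Qed.

Lemma ilen_split x w k : (k < ilen x w)%N ->
  exists2 y, (x <= y)%O && (y < w)%O & (k <= ilen x y)%N.
Proof.
move=> kl; have xw : (x <= w)%O by apply: contraLR kl => /ilen_nle ->.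
case/chain_inP: (ilen_chain xw) => s sz /andP[so al].
have k1s : (k.+1 < size s)%N by rewrite sz ltnS.
have ks := ltnW k1s.
have /andP[xy _] := allP al _ (mem_nth x ks).
have /andP[_ y'w] := allP al _ (mem_nth x k1s).
exists (nth x s k).
  by rewrite xy (lt_le_trans _ y'w) // lt_sorted_ltn_nth.
apply: ilen_ge; apply/chain_inP; exists (take k.+1 s).
  by rewrite size_take k1s.
rewrite (subseq_lt_sorted (take_subseq _ _) so); apply/allP => z zs.
have /andP[-> _] := allP al _ (mem_take zs).
have [i ilt <-] := nthP x zs; rewrite size_take k1s in ilt.
by rewrite nth_take // lt_sorted_leq_nth // inE (ltn_trans ilt).
Qed.
End ChainLength.

(** * The incidence algebra and its filtration *)

Section IncidenceAlgebra.
Variables (K : fieldType) (d : Order.disp_t) (X : finPOrderType d).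

Definition funmx := {ffun X * X -> K}.
HB.instance Definition _ := GRing.Lmodule.copy funmx {ffun X * X -> K^o}.
Implicit Types (f g h u v : funmx).

Definition convol (f g : funmx) : funmx :=
  [ffun p => \sum_(t : X) f (p.1, t) * g (t, p.2)].
Definition convol1 : funmx := [ffun p => (p.1 == p.2)%:R].

Fact convolA : associative convol.
Proof.
move=> f g h; apply/ffunP=> -[a b]; rewrite !ffunE /=.
under eq_bigr => t _ do rewrite ffunE big_distrr.
rewrite exchange_big; apply: eq_bigr => s _ /=; rewrite ffunE big_distrl.
by apply: eq_bigr => t _; rewrite mulrA.
Qed.

Fact convol1l : left_id convol1 convol.
Proof.
move=> f; apply/ffunP=> -[a b]; rewrite ffunE (bigD1 a) //= big1 ?addr0.
  by rewrite ffunE eqxx mul1r.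
by move=> t /negPf ta; rewrite ffunE /= eq_sym ta mul0r.
Qed.

Fact convol1r : right_id convol1 convol.
Proof.
move=> f; apply/ffunP=> -[a b]; rewrite ffunE (bigD1 b) //= big1 ?addr0.
  by rewrite ffunE eqxx mulr1.
by move=> t /negPf tb; rewrite ffunE /= tb mulr0.
Qed.

Fact convolDl : left_distributive convol +%R.
Proof.
move=> f g h; apply/ffunP=> p; rewrite !ffunE -big_split.
by apply: eq_bigr => t _; rewrite ffunE mulrDl.
Qed.

Fact convolDr : right_distributive convol +%R.
Proof.
move=> f g h; apply/ffunP=> p; rewrite !ffunE -big_split.
by apply: eq_bigr => t _; rewrite ffunE mulrDr.
Qed.

HB.instance Definition _ := GRing.Zmodule_isPzRing.Build funmx
  convolA convol1l convol1r convolDl convolDr.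

Lemma mulmxE (f g : funmx) p : (f * g) p = \sum_(t : X) f (p.1, t) * g (t, p.2).
Proof. by rewrite ffunE. Qed.

Lemma funmxBE (f g : funmx) p : (f - g) p = f p - g p.
Proof. by rewrite !ffunE. Qed.

Lemma onemxE p : (1 : funmx) p = (p.1 == p.2)%:R.
Proof. by rewrite ffunE. Qed.

Lemma scalemxE a (f : funmx) p : (a *: f) p = a * f p.
Proof. by rewrite ffunE. Qed.

Lemma scalemxAl a (f g : funmx) : a *: f * g = a *: (f * g).
Proof.
apply/ffunP=> p; rewrite scalemxE !mulmxE big_distrr /=.
by apply: eq_bigr => t _; rewrite scalemxE mulrA.
Qed.

Lemma scalemxAr a (f g : funmx) : f * (a *: g) = a *: (f * g).
Proof.
apply/ffunP=> p; rewrite scalemxE !mulmxE big_distrr /=.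
by apply: eq_bigr => t _; rewrite scalemxE mulrCA.
Qed.

Local Notation eb x y := (ebas K x y : funmx).

Lemma ebasE x y p : eb x y p = (p == (x, y))%:R.
Proof. by rewrite ffunE. Qed.

Lemma mul_ebas (x y z w : X) : eb x y * eb z w = if y == z then eb x w else 0.
Proof.
apply/ffunP=> -[s t]; rewrite ffunE /=; case: eqP => [<-|/eqP nyz].
  rewrite (bigD1 y) //= big1 ?addr0 => [|r /negPf ry]; last first.
    by rewrite !ebasE !xpair_eqE ry andbF mul0r.
  by rewrite !ebasE !xpair_eqE eqxx andbT -natrM mulnb.
rewrite ffunE big1 // => r _; rewrite !ebasE !xpair_eqE.
by case: (r =P y) => [->|]; [rewrite (negPf nyz) mulr0 | rewrite andbF mul0r].
Qed.

Lemma matrix_ebas_decomp (f : funmx) : f = \sum_(p : X * X) f p *: eb p.1 p.2.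
Proof.
apply/ffunP=> q; rewrite sum_ffunE (bigD1 q) //= big1 ?addr0.
  by rewrite scalemxE ebasE -surjective_pairing eqxx mulr1.
by move=> p pq; rewrite scalemxE ebasE -surjective_pairing eq_sym (negPf pq) mulr0.
Qed.

Lemma incidP (f : funmx) :
  reflect (forall x y, ~~ (x <= y)%O -> f (x, y) = 0) (incid f).
Proof.
apply: (iffP forallP) => [H x y nxy|H x].
  by move/forallP: (H x) => /(_ y); rewrite nxy => /eqP.
by apply/forallP=> y; apply/implyP=> /H ->.
Qed.

Lemma incid_le (f : funmx) x y : incid f -> f (x, y) != 0 -> (x <= y)%O.
Proof. by move=> /incidP H; apply: contraR => /H ->; rewrite eqxx. Qed.

Fact incid_subring_closed : subring_closed (@incid K d X : funmx -> bool).
Proof.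
split.
- by apply/incidP=> x y nxy; rewrite onemxE /=; case: eqP nxy => // ->; rewrite lexx.
- move=> f g /incidP Hf /incidP Hg; apply/incidP=> x y nxy.
  by rewrite !ffunE Hf // Hg // subrr.
move=> f g If Ig; apply/incidP=> x y nxy; rewrite mulmxE big1 // => t _.
have [->|/(incid_le If) xt] := eqVneq (f (x, t)) 0; first by rewrite mul0r.
have [->|/(incid_le Ig) ty] := eqVneq (g (t, y)) 0; first by rewrite mulr0.
by rewrite (le_trans xt ty) in nxy.
Qed.

Fact incid_submod_closed : subsemimod_closed (@incid K d X : funmx -> bool).
Proof.
split; first split.
- by apply/incidP=> x y _; rewrite ffunE.
- move=> f g /incidP Hf /incidP Hg; apply/incidP=> x y nxy.
  by rewrite !ffunE Hf // Hg // addr0.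
by move=> a f /incidP Hf; apply/incidP=> x y nxy; rewrite scalemxE Hf // mulr0.
Qed.

HB.instance Definition _ :=
  GRing.isSubringClosed.Build funmx (@incid K d X : funmx -> bool) incid_subring_closed.
HB.instance Definition _ :=
  GRing.isSubmodClosed.Build K funmx (@incid K d X : funmx -> bool) incid_submod_closed.

Lemma incid_ebas x y : (x <= y)%O -> incid (eb x y).
Proof.
by move=> xy; apply/incidP=> a b; rewrite ebasE; case: eqP => // -[-> ->]; rewrite xy.
Qed.

Lemma ilieE (f g : funmx) : incid f -> incid g -> ilie f g = f * g - g * f.
Proof.
suff imulE (u v : funmx) : incid u -> incid v -> imul u v = u * v.
  by move=> If Ig; rewrite /ilie !imulE.
move=> Iu Iv; apply/ffunP=> -[x y]; rewrite !ffunE /=.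
rewrite [RHS](bigID (fun t => (x <= t)%O && (t <= y)%O)) /= [X in _ = _ + X]big1 ?addr0 //.
by move=> t /nandP[] /incidP-> //; rewrite ?mul0r ?mulr0.
Qed.

Lemma incid_lie (f g : funmx) : incid f -> incid g -> incid (ilie f g).
Proof. by move=> If Ig; rewrite ilieE //; apply: rpredB; apply: rpredM. Qed.

Definition filt (k : nat) : {pred funmx} := fun f =>
  incid f && [forall x, forall y, (ilen x y < k)%N ==> (f (x, y) == 0)].

Lemma filtP k (f : funmx) :
  reflect (incid f /\ forall x y, (ilen x y < k)%N -> f (x, y) = 0) (f \in filt k).
Proof.
apply: (iffP andP) => -[If H]; split=> //.
  move=> x y lt; move/forallP: H => /(_ x) /forallP /(_ y).
  by rewrite lt => /eqP.
by apply/forallP=> x; apply/forallP=> y; apply/implyP=> /H ->.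
Qed.

Lemma filt_incid k (f : funmx) : f \in filt k -> incid f.
Proof. by case/filtP. Qed.

Lemma filt_vanish k (f : funmx) x y : f \in filt k -> (ilen x y < k)%N -> f (x, y) = 0.
Proof. by case/filtP=> _; apply. Qed.

Lemma filt0 (f : funmx) : (f \in filt 0) = incid f.
Proof. by apply/filtP/idP => [[]|]. Qed.

Lemma filtS j k : (j <= k)%N -> {subset filt k <= filt j}.
Proof.
move=> jk f /filtP[If H]; apply/filtP; split=> // x y lt.
exact/H/(leq_trans lt jk).
Qed.

Fact filt_submod_closed k : subsemimod_closed (filt k).
Proof.
split; first split.
- by apply/filtP; split=> [|x y _]; [exact: rpred0 | rewrite ffunE].
- move=> f g /filtP[If Hf] /filtP[Ig Hg]; apply/filtP; split; first exact: rpredD.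
  by move=> x y lt; rewrite !ffunE Hf // Hg // addr0.
move=> a f /filtP[If Hf]; apply/filtP; split; first exact: rpredZ.
by move=> x y lt; rewrite scalemxE Hf // mulr0.
Qed.

HB.instance Definition _ k := GRing.isSubmodClosed.Build K funmx (filt k)
  (filt_submod_closed k).

Lemma filtM a b (f g : funmx) : f \in filt a -> g \in filt b -> f * g \in filt (a + b).
Proof.
move=> /filtP[If Hf] /filtP[Ig Hg]; apply/filtP; split; first exact: rpredM.
move=> x y lt; rewrite mulmxE big1 // => t _.
have [->|ft] := eqVneq (f (x, t)) 0; first by rewrite mul0r.
have [->|gt] := eqVneq (g (t, y)) 0; first by rewrite mulr0.
have a_le : (a <= ilen x t)%N by rewrite leqNgt; apply: contra ft => /Hf ->.
have b_le : (b <= ilen t y)%N by rewrite leqNgt; apply: contra gt => /Hg ->.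
have := leq_trans (leq_add a_le b_le) (ilen_add (incid_le If ft) (incid_le Ig gt)).
by rewrite leqNgt lt.
Qed.

Lemma filt_lie a b (f g : funmx) :
  f \in filt a -> g \in filt b -> ilie f g \in filt (a + b).
Proof.
move=> Ff Fg; rewrite ilieE ?(filt_incid Ff) ?(filt_incid Fg) //.
by apply: rpredB; [|rewrite addnC]; apply: filtM.
Qed.

Lemma filt1P (f : funmx) : reflect (incid f /\ forall x, f (x, x) = 0) (f \in filt 1).
Proof.
apply: (iffP (filtP _ _)) => -[If H]; split=> //.
  by move=> x; apply: H; rewrite ilen_xx.
move=> x y; have [<- _|nxy] := eqVneq x y; first exact: H.
by rewrite ltnS leqn0 ilen_eq0 lt_neqAle nxy => /incidP ->.
Qed.

Lemma lie_filt1 (f g : funmx) : incid f -> incid g -> ilie f g \in filt 1.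
Proof.
move=> If Ig; apply/filt1P; split=> [|x]; first exact: incid_lie.
rewrite /ilie !ffunE /=.
have diag (u v : funmx) :
    \sum_(t | (x <= t)%O && (t <= x)%O) u (x, t) * v (t, x) = u (x, x) * v (x, x).
  by apply: big_pred1 => t /=; rewrite eq_le andbC.
by rewrite !diag mulrC subrr.
Qed.

Lemma ebas_filt x y : (x <= y)%O -> eb x y \in filt (ilen x y).
Proof.
move=> xy; apply/filtP; split=> [|a b]; first exact: incid_ebas.
by rewrite ebasE; case: eqP => // -[-> ->]; rewrite ltnn.
Qed.

Lemma filt_card (f : funmx) : f \in filt #|X| -> f = 0.
Proof.
by move=> Ff; apply/ffunP=> -[x y]; rewrite ffunE (filt_vanish Ff) ?ilen_lt_card.
Qed.

Lemma filt_decomp k (f : funmx) : f \in filt k ->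
  f = \sum_(p | (p.1 <= p.2)%O && (k <= ilen p.1 p.2)%N) f p *: eb p.1 p.2.
Proof.
case/filtP=> If Hf; rewrite {1}[f]matrix_ebas_decomp (bigID [pred p : X * X |
  (p.1 <= p.2)%O && (k <= ilen p.1 p.2)%N]) /= [X in _ + X]big1 ?addr0 //.
move=> -[x y] /nandP[/incidP-> // | ]; first by rewrite scale0r.
by rewrite -ltnNge => /Hf ->; rewrite scale0r.
Qed.

Lemma incid_decomp (f : funmx) : incid f ->
  f = \sum_(p | (p.1 <= p.2)%O) f p *: eb p.1 p.2.
Proof.
rewrite -filt0 => /filt_decomp {1}->; apply: eq_bigl => p; exact: andbT.
Qed.

Lemma ebas_lie x y w : (x <= y)%O -> (y <= w)%O -> x != w ->
  ilie (eb x y) (eb y w) = eb x w.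
Proof.
move=> xy yw nxw; rewrite ilieE ?incid_ebas // !mul_ebas eqxx.
by rewrite eq_sym (negPf nxw) subr0.
Qed.

(** * Lie automorphisms *)

Definition incid_linear (psi : funmx -> funmx) :=
  forall a (f g : funmx), incid f -> incid g -> psi (a *: f + g) = a *: psi f + psi g.

Section IncidLinear.
Variable psi : funmx -> funmx.
Hypothesis psi_lin : incid_linear psi.

Lemma incid_linear0 : psi 0 = 0.
Proof.
have := psi_lin 1 (rpred0 _) (rpred0 _).
by rewrite !scale1r !addr0 => /esym/eqP; rewrite -subr_eq0 addrK => /eqP.
Qed.

Lemma incid_linearD f g : incid f -> incid g -> psi (f + g) = psi f + psi g.
Proof. by move=> If Ig; have := psi_lin 1 If Ig; rewrite !scale1r. Qed.

Lemma incid_linearZ (a : K) f : incid f -> psi (a *: f) = a *: psi f.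
Proof.
by move=> If; have := psi_lin a If (rpred0 _); rewrite !addr0 incid_linear0 addr0.
Qed.

Lemma incid_linear_sum (I : Type) (r : seq I) (P : pred I) (F : I -> funmx) :
  (forall i, P i -> incid (F i)) ->
  psi (\sum_(i <- r | P i) F i) = \sum_(i <- r | P i) psi (F i).
Proof.
move=> IF; elim: r => [|i r IHr]; first by rewrite !big_nil incid_linear0.
rewrite !big_cons; case: ifP => // Pi.
by rewrite incid_linearD ?IHr ?IF //; apply: rpred_sum.
Qed.

End IncidLinear.

Lemma lie_aut_eq (psi chi : funmx -> funmx) :
  lie_automorphism psi -> (forall f, incid f -> psi f = chi f) ->
  lie_automorphism chi.
Proof.
case=> Hi Hl Hinj Hs Hb E; split.
- by move=> f If; rewrite -E //; apply: Hi.
- by move=> a f g If Ig; rewrite -!E ?Hl //; apply: rpredD => //; apply: rpredZ.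
- by move=> f g If Ig; rewrite -!E //; apply: Hinj.
- by move=> g /Hs[f If <-]; exists f; rewrite ?E.
- by move=> f g If Ig; rewrite -!E ?Hb //; apply: incid_lie.
Qed.

Lemma lie_aut_comp (psi chi : funmx -> funmx) :
  lie_automorphism psi -> lie_automorphism chi -> lie_automorphism (chi \o psi).
Proof.
case=> Hi Hl Hinj Hs Hb [Ci Cl Cinj Cs Cb]; split=> /=.
- by move=> f If; apply/Ci/Hi.
- by move=> a f g If Ig; rewrite Hl // Cl //; apply: Hi.
- by move=> f g If Ig /Cinj E; apply: Hinj => //; apply: E; apply: Hi.
- by move=> h /Cs[g /Hs[f If <-] <-]; exists f.
- by move=> f g If Ig; rewrite Hb // Cb //; apply: Hi.
Qed.

Lemma lie_aut_conj u v : incid u -> incid v -> u * v = 1 -> v * u = 1 ->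
  lie_automorphism (fun f => u * f * v).
Proof.
move=> Iu Iv uv vu.
have Iconj f : incid f -> incid (u * f * v) by move=> If; do 2?apply: rpredM.
split=> //.
- by move=> a f g If Ig; rewrite mulrDr mulrDl scalemxAr scalemxAl.
- move=> f g If Ig /(congr1 (fun h => v * h * u)).
  by rewrite !mulrA vu !mul1r -!mulrA vu !mulr1.
- move=> g Ig; exists (v * g * u); first by do 2?apply: rpredM.
  by rewrite !mulrA uv mul1r -!mulrA uv !mulr1.
- move=> f g If Ig; rewrite !ilieE ?Iconj // mulrBr mulrBl.
  by rewrite !mulrA -[u * f * v * u]mulrA -[u * g * v * u]mulrA vu !mulr1.
Qed.

Lemma filt_ind (V : nat -> funmx -> Prop) :
  (forall k, V k 0) ->
  (forall k a f g, V k f -> V k g -> V k (a *: f + g)) ->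
  (forall x y, (x <= y)%O -> V 0 (eb x y)) ->
  (forall f g, V 0 f -> V 0 g -> V 1 (ilie f g)) ->
  (forall k f g, V k f -> V 1 g -> V k.+1 (ilie f g)) ->
  forall k f, f \in filt k -> V k f.
Proof.
move=> V0 Vlin Vebas Vlie0 VlieS.
have Vebas1 x w : (x < w)%O -> V 1 (eb x w).
  move=> xw; rewrite -(ebas_lie (lexx x) (ltW xw)) ?lt_eqF //.
  by apply: Vlie0; apply: Vebas; rewrite ?lexx ?ltW.
have Vebas_ilen k x w : (x <= w)%O -> (k <= ilen x w)%N -> V k (eb x w).
  elim: k x w => [|k IHk] x w xw kl; first exact: Vebas.
  have [y /andP[xy yw] ky] := ilen_split kl.
  have xw' : x != w by rewrite lt_eqF // -ilen_gt0 (leq_trans _ kl).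
  by rewrite -(ebas_lie xy (ltW yw) xw'); apply: VlieS; [apply: IHk | apply: Vebas1].
move=> k f /filt_decomp ->; elim/big_rec: _ => [|p g /andP[pl pk] Vg]; first exact: V0.
exact: Vlin (Vebas_ilen _ _ _ pl pk) Vg.
Qed.

Section LieAutomorphismFiltration.
Variable psi : funmx -> funmx.
Hypothesis psiLA : lie_automorphism psi.

Lemma lie_aut_incid f : incid f -> incid (psi f).
Proof. by case: psiLA => + _ _ _ _; apply. Qed.

Lemma lie_aut_linear : incid_linear psi.
Proof. by case: psiLA. Qed.

Lemma lie_aut_inj f g : incid f -> incid g -> psi f = psi g -> f = g.
Proof. by case: psiLA => _ _ + _ _; apply. Qed.

Lemma lie_aut_onto g : incid g -> exists2 f, incid f & psi f = g.
Proof. by case: psiLA => _ _ _ + _; apply. Qed.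

Lemma lie_aut_lie f g : incid f -> incid g -> psi (ilie f g) = ilie (psi f) (psi g).
Proof. by case: psiLA => _ _ _ _; apply. Qed.

Lemma lie_aut_filt k f : f \in filt k -> psi f \in filt k.
Proof.
move=> Ff; suff [] : incid f /\ psi f \in filt k by [].
apply: (filt_ind (V := fun k f => incid f /\ psi f \in filt k)) Ff.
- by move=> j; rewrite (incid_linear0 lie_aut_linear); split; apply: rpred0.
- move=> j a g h [Ig Fg] [Ih Fh]; split; first by apply: rpredD => //; apply: rpredZ.
  by rewrite lie_aut_linear //; apply: rpredD => //; apply: rpredZ.
- by move=> x y xy; rewrite filt0; split; [|apply: lie_aut_incid]; apply: incid_ebas.
- move=> g h [Ig _] [Ih _]; split; first exact: incid_lie.
  by rewrite lie_aut_lie //; apply: lie_filt1; apply: lie_aut_incid.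
- move=> j g h [Ig Fg] [Ih Fh]; split; first exact: incid_lie.
  by rewrite lie_aut_lie // -addn1; apply: filt_lie.
Qed.

Lemma lie_aut_filt_onto k h : h \in filt k -> exists2 g, g \in filt k & psi g = h.
Proof.
apply: (filt_ind (V := fun k h => exists2 g, g \in filt k & psi g = h)).
- by move=> j; exists 0; rewrite ?rpred0 ?(incid_linear0 lie_aut_linear).
- move=> j a _ _ [g Fg <-] [g' Fg' <-]; exists (a *: g + g').
    by apply: rpredD => //; apply: rpredZ.
  by apply: lie_aut_linear; [apply: filt_incid Fg | apply: filt_incid Fg'].
- by move=> x y /incid_ebas/lie_aut_onto[g Ig <-]; exists g; rewrite ?filt0.
- move=> _ _ [g Fg <-] [g' Fg' <-]; exists (ilie g g').
    by apply: lie_filt1; [apply: filt_incid Fg | apply: filt_incid Fg'].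
  by rewrite lie_aut_lie //; [apply: filt_incid Fg | apply: filt_incid Fg'].
- move=> j _ _ [g Fg <-] [g' Fg' <-]; exists (ilie g g').
    by rewrite -addn1; apply: filt_lie.
  by rewrite lie_aut_lie //; [apply: filt_incid Fg | apply: filt_incid Fg'].
Qed.

Lemma lie_aut_filt_reflect k g : incid g -> psi g \in filt k -> g \in filt k.
Proof.
move=> Ig /lie_aut_filt_onto[g' Fg' eg'].
by rewrite -(lie_aut_inj (filt_incid Fg') Ig eg').
Qed.

End LieAutomorphismFiltration.

(** * Weights *)

Definition weight (q : X * X) f : K := f (q.1, q.1) - f (q.2, q.2).

Lemma weightD q f g : weight q (f + g) = weight q f + weight q g.
Proof. by rewrite /weight !ffunE addrACA opprD. Qed.

Lemma weight_sum q (I : Type) (r : seq I) (P : pred I) (c : I -> K) (F : I -> funmx) :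
  weight q (\sum_(i <- r | P i) c i *: F i) = \sum_(i <- r | P i) c i * weight q (F i).
Proof.
rewrite /weight !sum_ffunE -sumrB; apply: eq_bigr => i _.
by rewrite !scalemxE mulrBr.
Qed.

Lemma weight_filt1 q f : f \in filt 1 -> weight q f = 0.
Proof. by case/filt1P=> _ f0; rewrite /weight !f0 subrr. Qed.

Lemma weight_ebas q z : weight q (eb z z) = (q.1 == z)%:R - (q.2 == z)%:R.
Proof. by rewrite /weight !ebasE !xpair_eqE !andbb. Qed.

Lemma weight_lie_aut (psi : funmx -> funmx) q g : lie_automorphism psi -> incid g ->
  weight q (psi g) = \sum_z g (z, z) * weight q (psi (eb z z)).
Proof.
move=> psiLA Ig; have psi_lin := lie_aut_linear psiLA.
pose D := \sum_z g (z, z) *: eb z z.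
have ID : incid D by apply: rpred_sum => z _; apply/rpredZ/incid_ebas.
have gD1 : g - D \in filt 1.
  apply/filt1P; split=> [|x]; first exact: rpredB.
  rewrite !ffunE sum_ffunE (bigD1 x) //= big1 ?addr0 => [|z zx].
    by rewrite scalemxE ebasE eqxx mulr1 subrr.
  by rewrite scalemxE ebasE xpair_eqE eq_sym (negPf zx) mulr0.
rewrite -{1}[g](subrK D) incid_linearD ?(filt_incid gD1) // weightD.
rewrite weight_filt1 ?add0r; last exact: lie_aut_filt.
rewrite (incid_linear_sum psi_lin) => [|z _]; last exact/rpredZ/incid_ebas.
rewrite -weight_sum; congr weight; apply: eq_bigr => z _.
by rewrite (incid_linearZ psi_lin) ?incid_ebas.
Qed.

(* Strictness matters: in characteristic 2, (a, b) and (b, a) have equal weights. *)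
Lemma weight_inj q q' : (q.1 < q.2)%O -> (q'.1 < q'.2)%O ->
  (forall z, weight q (eb z z) = weight q' (eb z z)) -> q = q'.
Proof.
case: q q' => a b [a' b'] /= ab ab' H.
have in_q' z : weight (a, b) (eb z z) != 0 -> (a' == z) || (b' == z).
  apply: contraTT => /norP[/negPf na /negPf nb].
  by rewrite negbK H weight_ebas /= na nb subrr.
have /in_q' Ha : weight (a, b) (eb a a) != 0.
  by rewrite weight_ebas /= eqxx gt_eqF // subr0 oner_neq0.
have /in_q' Hb : weight (a, b) (eb b b) != 0.
  by rewrite weight_ebas /= eqxx lt_eqF // sub0r oppr_eq0 oner_neq0.
case/orP: Ha => /eqP ea.
  by move: Hb; rewrite ea lt_eqF //= => /eqP->.
move: Hb; rewrite ea (lt_eqF ab) orbF => /eqP ea'.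
by rewrite ea' ea (lt_gtF ab) in ab'.
Qed.

Definition offdiag_below (m : nat) f :=
  forall x y, x != y -> (ilen x y < m)%N -> f (x, y) = 0.

Lemma filt_offdiag m f : f \in filt m -> offdiag_below m f.
Proof. by move=> Ff x y _; apply: filt_vanish. Qed.

Lemma incid_offdiag1 f : incid f -> offdiag_below 1 f.
Proof.
by move=> If x y nxy; rewrite ltnS leqn0 ilen_eq0 lt_neqAle nxy => /(incidP _ If).
Qed.

Lemma mul_at_level m h h' x y : (0 < m)%N ->
  incid h -> incid h' -> offdiag_below m h -> offdiag_below m h' -> ilen x y = m ->
  (h * h') (x, y) = h (x, x) * h' (x, y) + h (x, y) * h' (y, y).
Proof.
move=> m0 Ih Ih' Oh Oh' lxy.
have nxy : x != y by apply: contraTneq m0 => exy; rewrite -lxy exy ilen_xx.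
rewrite mulmxE /= (bigD1 x) //= (bigD1 y) 1?eq_sym //= big1 ?addr0 // => t /andP[ty tx].
have [->|ht] := eqVneq (h (x, t)) 0; first by rewrite mul0r.
have [->|h't] := eqVneq (h' (t, y)) 0; first by rewrite mulr0.
have m_xt : (m <= ilen x t)%N.
  by rewrite leqNgt; apply: contra ht => lt; rewrite Oh // eq_sym.
have m_ty : (m <= ilen t y)%N by rewrite leqNgt; apply: contra h't => /Oh'->.
have := leq_trans (leq_add m_xt m_ty) (ilen_add (incid_le Ih ht) (incid_le Ih' h't)).
by rewrite lxy -{3}[m]add0n leq_add2r leqNgt m0.
Qed.

Lemma lie_at_level m h h' x y : (0 < m)%N ->
  incid h -> incid h' -> offdiag_below m h -> offdiag_below m h' -> ilen x y = m ->
  ilie h h' (x, y) = weight (x, y) h * h' (x, y) - weight (x, y) h' * h (x, y).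
Proof.
move=> m0 Ih Ih' Oh Oh' lxy; rewrite ilieE // funmxBE.
rewrite !(mul_at_level m0 _ _ _ _ lxy) // /weight /=.
by ring.
Qed.

Definition diagonal f := forall x y, x != y -> f (x, y) = 0.

Lemma lie_diag h v x y : incid h -> incid v -> diagonal h ->
  ilie h v (x, y) = weight (x, y) h * v (x, y).
Proof.
move=> Ih Iv Dh; rewrite ilieE // !ffunE /= (bigD1 x) //= [X in _ - X](bigD1 y) //=.
rewrite !big1 ?addr0 => [|t ty|t tx]; last 2 first.
- by rewrite Dh ?mulr0 // eq_sym.
- by rewrite Dh ?mul0r // eq_sym.
by rewrite /weight mulrBl [v _ * _]mulrC.
Qed.

(** * Normalizing a Lie automorphism *)

Lemma filtX m f n : f \in filt m -> f ^+ n \in filt (n * m).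
Proof.
move=> Ff; elim: n => [|n IHn]; first by rewrite expr0 filt0; apply: rpred1.
by rewrite exprS mulSn; apply: filtM.
Qed.

Lemma filt_unipotent_inv m s : (0 < m)%N -> s \in filt m ->
  exists2 w, w \in filt m & (1 + s) * (1 + w) = 1 /\ (1 + w) * (1 + s) = 1.
Proof.
move=> m0 Fs; have Fns := rpredNr Fs; pose N := #|X|.
exists (\sum_(i < N) (- s) ^+ i.+1).
  by apply: rpred_sum => i _; apply: (filtS _ (filtX _ Fns)); rewrite leq_pmull.
have sN0 : (- s) ^+ N.+1 = 0.
  apply/filt_card/(filtS _ (filtX _ Fns)).
  by rewrite (leq_trans (leqnSn N)) // leq_pmulr.
by have := nilpotent_unit sN0; rewrite opprK big_ord_recl expr0.
Qed.

Lemma unipotent_conj m s : (0 < m)%N -> s \in filt m ->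
  exists T : funmx -> funmx, [/\ lie_automorphism T,
    forall i f, f \in filt i -> T f - f \in filt (m + i)
  & forall h q, incid h -> offdiag_below m h -> ilen q.1 q.2 = m ->
      T h q = h q - weight q h * s q].
Proof.
move=> m0 Fs; have [w Fw [uv vu]] := filt_unipotent_inv m0 Fs.
have Is := filt_incid Fs.
have I1s : incid (1 + s) by apply: rpredD => //; apply: rpred1.
have I1w : incid (1 + w) by apply: rpredD; [apply: rpred1 | apply: filt_incid Fw].
have commE f : (1 + s) * f - f * (1 + s) = s * f - f * s.
  by rewrite mulrDl mulrDr mul1r mulr1 opprD addrACA subrr add0r.
have Fcomm f i : f \in filt i -> s * f - f * s \in filt (m + i).
  by move=> Ff; apply: rpredB; [|rewrite addnC]; apply: filtM.
exists (fun f => (1 + s) * f * (1 + w)); split.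
- exact: lie_aut_conj.
- move=> i f Ff; rewrite conj_subr // commE -[(m + i)%N]addn0.
  by apply: filtM; [apply: Fcomm | rewrite filt0].
move=> h [x y] Ih Oh /= lxy.
rewrite -[LHS](subrKC (h (x, y))) -funmxBE conj_subr // commE mulrDr mulr1.
rewrite [X in _ + X]ffunE (filt_vanish (filtM (Fcomm h 0 _) Fw)) ?filt0 //; last first.
  by rewrite addn0 lxy -{1}[m]addn0 ltn_add2l.
rewrite addr0 -ilieE // (lie_at_level m0 Is Ih (filt_offdiag Fs)) //.
by rewrite weight_filt1 ?mul0r ?sub0r //; apply: (filtS m0 Fs).
Qed.

(* The cocycle identity says that h z q / weight q (h z) does not depend on z. *)
Lemma level_coboundary (I : finType) (h : I -> funmx) m : (0 < m)%N ->
  (forall q, ilen q.1 q.2 = m -> exists z, weight q (h z) != 0) ->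
  (forall z z' q, ilen q.1 q.2 = m ->
     weight q (h z) * h z' q = weight q (h z') * h z q) ->
  exists2 s, s \in filt m & forall z q, ilen q.1 q.2 = m -> h z q = weight q (h z) * s q.
Proof.
move=> m0 nz coc.
pose s : funmx := [ffun q => if ilen q.1 q.2 != m then 0 else
  if [pick z | weight q (h z) != 0] is Some z then h z q / weight q (h z) else 0].
exists s.
  apply/filtP; split=> [|x y lt]; last by rewrite ffunE /= ltn_eqF.
  by apply/incidP=> x y /ilen_nle l0; rewrite ffunE /= l0 eq_sym -lt0n m0.
move=> z q lq; rewrite ffunE lq eqxx /=; case: pickP => [z0 nz0|none]; last first.
  by have [z1] := nz q lq; rewrite none.
by rewrite mulrA coc // -mulrA mulrCA divff ?mulr1.
Qed.

Lemma lie_aut_weight_neq0 (psi : funmx -> funmx) q : lie_automorphism psi ->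
  q.1 != q.2 -> exists z, weight q (psi (eb z z)) != 0.
Proof.
move=> psiLA nq; have [g Ig eg] := lie_aut_onto psiLA (incid_ebas (lexx q.1)).
have := weight_lie_aut q psiLA Ig; rewrite eg weight_ebas eqxx eq_sym (negPf nq) subr0.
case: (pickP (fun z => weight q (psi (eb z z)) != 0)) => [z nz _|none].
  by exists z.
rewrite big1 => [/eqP|z _]; first by rewrite oner_eq0.
by move/negbFE/eqP: (none z) => ->; rewrite mulr0.
Qed.

Lemma lie_ebas_diag z z' : ilie (eb z z) (eb z' z') = 0.
Proof.
rewrite ilieE ?incid_ebas // !mul_ebas eq_sym.
by case: eqP => [->|_]; rewrite subrr.
Qed.

Lemma lie_ebas_diag_ebas z x y : (x <= y)%O ->
  ilie (eb z z) (eb x y) = ((z == x)%:R - (z == y)%:R) *: eb x y.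
Proof.
move=> xy; rewrite ilieE ?incid_ebas // !mul_ebas scalerBl.
congr (_ - _); first by case: eqP => [->|]; rewrite ?scale1r ?scale0r.
by rewrite eq_sym; case: eqP => [->|]; rewrite ?scale1r ?scale0r.
Qed.

Section DiagonalNormalForm.
Variable psi : funmx -> funmx.
Hypotheses (psiLA : lie_automorphism psi) (psi_diag : forall z, diagonal (psi (eb z z))).

Lemma ebas_image_weight x y q : (x <= y)%O -> psi (eb x y) q != 0 ->
  forall z, weight q (psi (eb z z)) = (z == x)%:R - (z == y)%:R.
Proof.
move=> xy nz z; have psi_lin := lie_aut_linear psiLA.
have Iz : incid (eb z z) by apply: incid_ebas.
have := congr1 (fun f => f q) (lie_aut_lie psiLA Iz (incid_ebas xy)).
rewrite lie_ebas_diag_ebas // (incid_linearZ psi_lin) ?incid_ebas // scalemxE.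
rewrite [q]surjective_pairing in nz *; rewrite lie_diag; first by move/(mulIf nz).
- exact: (lie_aut_incid psiLA Iz).
- exact: (lie_aut_incid psiLA (incid_ebas xy)).
- exact: psi_diag.
Qed.

Lemma ebas_image_support_uniq x y q q' : (x < y)%O ->
  psi (eb x y) q != 0 -> psi (eb x y) q' != 0 -> q = q'.
Proof.
move=> xy nz nz'.
have F1 : psi (eb x y) \in filt 1.
  apply: (filtS _ (lie_aut_filt psiLA (ebas_filt (ltW xy)))).
  by rewrite ilen_gt0.
have strict p : psi (eb x y) p != 0 -> (p.1 < p.2)%O.
  case: p => a b /= nzp; rewrite lt_neqAle (incid_le (filt_incid F1) nzp) andbT.
  by apply: contraNneq nzp => ->; case/filt1P: F1 => _ ->.
apply: weight_inj; [exact: strict | exact: strict | move=> a].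
have [g Ig <-] := lie_aut_onto psiLA (incid_ebas (lexx a)).
rewrite !(weight_lie_aut _ psiLA Ig); apply: eq_bigr => z _.
by rewrite (ebas_image_weight (ltW xy) nz) (ebas_image_weight (ltW xy) nz').
Qed.

Lemma ebas_image_level x y q : (x <= y)%O -> psi (eb x y) q != 0 ->
  ilen q.1 q.2 = ilen x y.
Proof.
case: q => a b xy nz /=.
have [exy|nxy] := eqVneq x y.
  move: nz; rewrite -exy ilen_xx; have [<- _|nab] := eqVneq a b; first exact: ilen_xx.
  by rewrite psi_diag // eqxx.
have {nxy}lt_xy : (x < y)%O by rewrite lt_neqAle nxy.
set c := psi (eb x y) (a, b) in nz.
have psi_c : psi (eb x y) = c *: eb a b.
  apply/ffunP=> q; rewrite scalemxE ebasE.
  have [->|nq] := eqVneq q (a, b); first by rewrite mulr1.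
  rewrite mulr0; apply/eqP; apply: contraR nq => nzq; apply/eqP.
  exact: (ebas_image_support_uniq lt_xy).
have Fxy := lie_aut_filt psiLA (ebas_filt (ltW lt_xy)).
have ab : (a <= b)%O := incid_le (filt_incid Fxy) nz.
apply/anti_leq/andP; split; last first.
  by rewrite leqNgt; apply: contra nz => lt; rewrite /c (filt_vanish Fxy lt).
have : c^-1 *: eb x y \in filt (ilen a b).
  apply: (lie_aut_filt_reflect psiLA); first exact/rpredZ/incid_ebas/ltW.
  rewrite (incid_linearZ (lie_aut_linear psiLA)) ?incid_ebas ?ltW // psi_c scalerA.
  by rewrite mulVf // scale1r ebas_filt.
move=> Fc; rewrite leqNgt; apply/negP => /(filt_vanish Fc)/eqP.
by rewrite scalemxE ebasE eqxx mulr1 invr_eq0 (negPf nz).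
Qed.

Lemma Lcomp_ebas_image x y : (x <= y)%O ->
  Lcomp (ilen x y) (psi (eb x y)) = psi (eb x y).
Proof.
move=> xy; apply/ffunP=> q; rewrite ffunE; case: eqP => // nq.
by apply/esym/eqP; apply: contra_notT nq; apply: ebas_image_level.
Qed.

End DiagonalNormalForm.

Section Normalization.
Variable phi : funmx -> funmx.
Hypothesis phiLA : lie_automorphism phi.

Definition normalized m psi :=
  [/\ lie_automorphism psi,
      forall i f, f \in filt i -> psi f - phi f \in filt i.+1
    & forall z, offdiag_below m (psi (eb z z))].

Lemma normalized1 : normalized 1 phi.
Proof.
split=> // [i f Ff|z]; first by rewrite subrr rpred0.
by apply/incid_offdiag1/(lie_aut_incid phiLA)/incid_ebas.
Qed.

Lemma normalized_step m psi : (0 < m)%N -> normalized m psi ->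
  exists psi', normalized m.+1 psi'.
Proof.
move=> m0 [psiLA psi_phi psi_diag].
have Ih z : incid (psi (eb z z)) by apply/(lie_aut_incid psiLA)/incid_ebas.
have [s Fs hs] : exists2 s, s \in filt m & forall z q, ilen q.1 q.2 = m ->
    psi (eb z z) q = weight q (psi (eb z z)) * s q.
  apply: level_coboundary => // [q lq|z z' q lq].
    by apply: lie_aut_weight_neq0; rewrite // lt_eqF // -ilen_gt0 lq.
  apply/eqP; rewrite -subr_eq0 [q]surjective_pairing.
  rewrite -(lie_at_level m0 (Ih z) (Ih z') (psi_diag z) (psi_diag z')) //.
  by rewrite -lie_aut_lie ?incid_ebas // lie_ebas_diag (incid_linear0 (lie_aut_linear psiLA)) ffunE.
have [T [TLA Tfilt Tlevel]] := unipotent_conj m0 Fs.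
exists (T \o psi); split.
- exact: lie_aut_comp.
- move=> i f Ff /=.
  have -> : T (psi f) - phi f = (T (psi f) - psi f) + (psi f - phi f).
    by rewrite addrA subrK.
  apply: rpredD; last exact: psi_phi.
  apply: (filtS _ (Tfilt _ _ (lie_aut_filt psiLA Ff))).
  by rewrite -add1n leq_add2r.
move=> z x y nxy; rewrite ltnS leq_eqVlt => /orP[/eqP lxy|lt] /=.
  by rewrite Tlevel // (hs z (x, y) lxy) subrr.
have -> : T (psi (eb z z)) (x, y) =
    psi (eb z z) (x, y) + (T (psi (eb z z)) - psi (eb z z)) (x, y).
  by rewrite funmxBE subrKC.
rewrite psi_diag // add0r (filt_vanish (Tfilt 0 _ _)) ?addn0 //.
by rewrite filt0.
Qed.

Lemma normalized_exists m : exists psi, normalized m.+1 psi.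
Proof.
elim: m => [|m [psi Npsi]]; first by exists phi; apply: normalized1.
exact: normalized_step Npsi.
Qed.

Lemma normalized_Lcomp m psi i f : normalized m psi -> f \in filt i ->
  Lcomp i (phi f) = Lcomp i (psi f).
Proof.
case=> _ psi_phi _ Ff; apply/ffunP=> q; rewrite !ffunE; case: eqP => // lq.
apply/eqP; rewrite eq_sym -subr_eq0 -funmxBE [q]surjective_pairing.
by rewrite (filt_vanish (psi_phi _ _ Ff)) // lq.
Qed.

Lemma tilde_normalized psi : normalized #|X|.+1 psi ->
  forall f, incid f -> tilde phi f = psi f.
Proof.
move=> Npsi; have [psiLA _ psi_diag] := Npsi.
have diag z : diagonal (psi (eb z z)).
  by move=> x y nxy; apply: psi_diag; rewrite // ltnS ltnW // ilen_lt_card.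
move=> f If; rewrite [in RHS](incid_decomp If).
rewrite (incid_linear_sum (lie_aut_linear psiLA)) => [|p pl]; last exact/rpredZ/incid_ebas.
apply: eq_bigr => -[x y] /= xy.
rewrite (incid_linearZ (lie_aut_linear psiLA)) ?incid_ebas //.
by rewrite (normalized_Lcomp Npsi (ebas_filt xy)) (Lcomp_ebas_image psiLA diag xy).
Qed.

End Normalization.

End IncidenceAlgebra.

Theorem proposition4p5 (K : fieldType) (d : Order.disp_t) (X : finPOrderType d)
  (phi : {ffun X * X -> K} -> {ffun X * X -> K}) :
  poset_connected X ->
  lie_automorphism phi ->
  lie_automorphism (tilde phi).
Proof.
move=> _ phiLA; have [psi Npsi] := normalized_exists phiLA #|X|.
have [psiLA _ _] := Npsi.
exact: lie_aut_eq psiLA (fun f If => esym (tilde_normalized Npsi If)).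
Qed.
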